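(* Let $n\ge1$. Every $1$-almost-increasing permutation $\pi\in S_n$ can be written as $\pi=x_n\circ x_{n-1}\circ\cdots\circ x_1(e_0)$ for exactly one word $x_n\cdots x_1$ of length $n$ over the alphabet $\{\rho_{1,1},\rho_{1,2},\rho_{2,1},\rho_{2,2}\}$ such that $x_1=\rho_{1,1}$ and the word contains neither $\rho_{2,1}\rho_{1,1}$ nor $\rho_{2,2}\rho_{1,1}$ as a substring of consecutive letters.
   Context: A permutation $\pi\in S_n$ (one-line form) is $1$-almost-increasing if for every $i$ there is at most one $j\le i$ with $\pi_j>i$; equivalently, it avoids $4321,4312,3421,3412$. $e_0$ is the empty permutation. For $\pi\in S_m$ and $1\le i,j\le m+1$, $\rho_{i,j}(\pi)\in S_{m+1}$ is obtained by increasing by $1$ every entry of $\pi$ that is $\ge i$ and inserting the value $i$ at position $j$; in particular $\rho_{1,1}(e_0)=[1]$. A word $x_n\cdots x_1$ denotes the composition with the rightmost letter $x_1$ applied first. *)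

From mathcomp Require Import all_boot.
Set Implicit Arguments. Unset Strict Implicit. Unset Printing Implicit Defensive.

(* Permutations of {1,..,n} in one-line notation: s = [:: pi_1; ...; pi_n]. *)
Definition is_perm (n : nat) (s : seq nat) : Prop := perm_eq s (iota 1 n).

Definition almost_inc1 (s : seq nat) : Prop :=
  forall i, 1 <= i <= size s -> count (fun v => i < v) (take i s) <= 1.

(* rho_{i,j}: increase every entry >= i by 1, then insert value i at (1-based) position j. *)
Definition rho (i j : nat) (s : seq nat) : seq nat :=
  let s' := map (fun v => if i <= v then v.+1 else v) s in
  take j.-1 s' ++ i :: drop j.-1 s'.

Inductive letter := R11 | R12 | R21 | R22.

Definition letter_op (x : letter) : seq nat -> seq nat :=
  match x with
  | R11 => rho 1 1 | R12 => rho 1 2 | R21 => rho 2 1 | R22 => rho 2 2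
  end.

(* A word x_n ... x_1 is represented by the list [:: x_n; ...; x_1] (written order);
   its evaluation on the empty permutation e_0 is x_n (... (x_1 e_0)). *)
Definition eval_word (w : seq letter) : seq nat := foldr letter_op [::] w.

Definition has_factor (u w : seq letter) : Prop := exists p q, w = p ++ u ++ q.

From mathcomp Require Import all_boot zify.
Set Implicit Arguments. Unset Strict Implicit. Unset Printing Implicit Defensive.

(* The last letter applied inserts 1 or 2 at position 1 or 2, and it can be read
   off the first two entries of the permutation: rho_{1,1} if 1 comes first,
   rho_{1,2} if 1 comes second, otherwise rho_{2,1} or rho_{2,2} according to the
   position of 2, which 1-almost-increasingness forces into the first two places.
   Deleting the inserted value and renumbering inverts rho and preserves
   1-almost-increasingness, which gives existence by induction on n.  For
   uniqueness, in a word avoiding the two forbidden factors the permutation starts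
   with 1 exactly when the last letter applied is rho_{1,1}; so after a letter
   rho_{2,j} the value 1 is never among the first two entries, the reading above
   recovers the last letter, and induction concludes. *)

Definition letter_val (x : letter) : nat := match x with R11 | R12 => 1 | _ => 2 end.
Definition letter_pos (x : letter) : nat := match x with R11 | R21 => 1 | _ => 2 end.

Lemma letter_opE x : letter_op x = rho (letter_val x) (letter_pos x).
Proof. by case: x. Qed.

Lemma rhoE i j s :
  rho i j s = take j.-1 (map (bump i) s) ++ i :: drop j.-1 (map (bump i) s).
Proof.
rewrite /rho /= (@eq_map _ _ _ (bump i)) // => v.
by rewrite /bump; case: leqP.
Qed.

Lemma rho1E i s : rho i 1 s = i :: map (bump i) s.
Proof. by rewrite rhoE take0 drop0. Qed.

Lemma rho2E i d s : rho i 2 (d :: s) = bump i d :: i :: map (bump i) s.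
Proof. by rewrite rhoE /= take0 drop0. Qed.

Lemma bump_eq1 i d : 0 < i -> (bump i d == 1) = (1 < i) && (d == 1).
Proof. by rewrite /bump; case: leqP; case: eqP; lia. Qed.

Definition unrho (i : nat) (p : seq nat) : seq nat := map (unbump i) (rem i p).

Lemma rem_cat_cons (T : eqType) (x : T) s1 s2 :
  x \notin s1 -> rem x (s1 ++ x :: s2) = s1 ++ s2.
Proof.
elim: s1 => /= [|y s1 IH]; first by rewrite eqxx.
by rewrite inE negb_or eq_sym => /andP[/negPf -> /IH ->].
Qed.

Lemma take_rem (T : eqType) (x : T) s k :
  index x s <= k -> take k (rem x s) = rem x (take k.+1 s).
Proof.
elim: s k => [|y s IH] k //=; case: eqVneq => //= _.
by case: k => //= k /IH ->.
Qed.

Lemma rhoK i j : cancel (rho i j) (unrho i).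
Proof.
move=> s; have iNs : i \notin map (bump i) s.
  by apply/mapP => -[v _ /eqP]; rewrite (negPf (neq_bump i v)).
rewrite /unrho rhoE rem_cat_cons ?cat_take_drop ?(mapK (@bumpK i)) //.
by apply: contra iNs; apply: mem_take.
Qed.

Lemma unbumpK_rem i p : uniq p -> {in rem i p, cancel (unbump i) (bump i)}.
Proof. by move=> up v; rewrite mem_rem_uniq // => /andP[vi _]; apply: unbumpK. Qed.

Lemma unrhoK i p : uniq p -> i \in p -> rho i (index i p).+1 (unrho i p) = p.
Proof.
move=> up ip; set k := index i p.
have sz : size (take k p) = k by rewrite size_takel // ltnW // index_mem.
have p_split : p = take k p ++ i :: drop k.+1 p.
  by rewrite -{1}(cat_take_drop k p) (drop_nth i) ?index_mem ?nth_index.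
have bump_unrho : map (bump i) (unrho i p) = rem i p.
  by rewrite -map_comp map_id_in // => v /(unbumpK_rem up).
by rewrite rhoE bump_unrho remE -/k take_size_cat // drop_size_cat // -p_split.
Qed.

Lemma is_permP n s :
  is_perm n s <-> [/\ uniq s, size s = n & {in s, forall v, 0 < v <= n}].
Proof.
split=> [ps | [us sz rs]].
  split; first by rewrite (perm_uniq ps) iota_uniq.
    by rewrite (perm_size ps) size_iota.
  by move=> v; rewrite (perm_mem ps) mem_iota; lia.
apply: uniq_perm; rewrite ?iota_uniq //.
have [] // := @uniq_min_size _ s (iota 1 n) us; last by rewrite size_iota sz.
by move=> v /rs; rewrite mem_iota; lia.
Qed.

Lemma unrho_perm n i p : is_perm n.+1 p -> i \in p -> is_perm n (unrho i p).
Proof.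
move=> /is_permP[up sp rp] ip; apply/is_permP; split.
- by rewrite map_inj_in_uniq ?rem_uniq //; apply: can_in_inj; apply: unbumpK_rem.
- by rewrite size_map size_rem // sp.
- move=> v /mapP[u]; rewrite mem_rem_uniq // => /andP[ui /rp] + ->.
  by have := rp i ip; rewrite /unbump; lia.
Qed.

Lemma unrho_almost_inc1 i p : 0 < i <= 2 -> i \in p -> index i p <= 1 ->
  uniq p -> almost_inc1 p -> almost_inc1 (unrho i p).
Proof.
move=> i12 ip ip1 up hp k /andP[k1]; rewrite size_map size_rem // => kp.
have kp' : 0 < k.+1 <= size p by move: kp; case: (size p) => /=; lia.
rewrite /unrho -map_take take_rem ?(leq_trans ip1) //.
rewrite count_map (rem_filter _ (take_uniq _ up)) count_filter.
apply: leq_trans (hp k.+1 kp').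
by apply: sub_count => v /= /andP[]; rewrite /unbump; lia.
Qed.

Lemma size_eval_word w : size (eval_word w) = size w.
Proof.
elim: w => //= x w <-.
by rewrite letter_opE rhoE size_cat /= addnS -size_cat cat_take_drop size_map.
Qed.

Lemma eval_word_cons x w : eval_word (x :: w) = letter_op x (eval_word w).
Proof. by []. Qed.

Definition is_R11 (x : letter) : bool := if x is R11 then true else false.

Definition may_precede (x y : letter) : bool := is_R11 y ==> (letter_val x == 1).

Definition admissible (w : seq letter) : bool :=
  sorted may_precede w && is_R11 (last R22 w).

Lemma admissible_cons2 x y t :
  admissible [:: x, y & t] = may_precede x y && admissible (y :: t).
Proof. by rewrite /admissible /= andbA. Qed.

Lemma sorted_factor2P (e : rel letter) w :
  sorted e w <-> (forall a b, has_factor [:: a; b] w -> e a b).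
Proof.
split=> [sw a b [p [q ew]] | ].
  by move: sw; rewrite ew sorted_cat_cons /= => /and3P[].
elim: w => [|x t IH] // hf; case: t IH hf => //= y t IH hf.
apply/andP; split; first by apply: hf; exists [::], t.
by apply: IH => a b [p [q ew]]; apply: hf; exists (x :: p), q; rewrite ew.
Qed.

Lemma admissibleP w :
  reflect [/\ last R22 w = R11, ~ has_factor [:: R21; R11] w
           & ~ has_factor [:: R22; R11] w] (admissible w).
Proof.
apply: (iffP andP) => [[/sorted_factor2P mw] | [lw n21 n22]].
  by case: (last R22 w) => //; split=> // /mw.
split; last by rewrite lw.
by apply/sorted_factor2P => -[] [].
Qed.

Lemma head_eval_word w :
  admissible w -> (head 0 (eval_word w) == 1) = is_R11 (head R22 w).
Proof.
elim: w => [|x [|y t] IH] //; first by case: x.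
rewrite admissible_cons2 eval_word_cons letter_opE => /andP[xy /IH].
case: (eval_word (y :: t)) (size_eval_word (y :: t)) => // d s _ /= yd.
have /implyP dx : (d == 1) ==> (letter_val x == 1) by rewrite yd.
case: x {xy} dx => dx; rewrite ?rho1E ?rho2E /= ?bump_eq1 //=.
by case: eqP dx => // _ /(_ isT).
Qed.

Definition decode_letter (p : seq nat) : letter :=
  if p is a :: c :: _ then
    if a == 1 then R11 else if c == 1 then R12 else if a == 2 then R21 else R22
  else R11.

Lemma decode_eval_word x y t :
  admissible [:: x, y & t] -> decode_letter (eval_word [:: x, y & t]) = x.
Proof.
rewrite admissible_cons2 eval_word_cons letter_opE => /andP[xy /head_eval_word].
case: (eval_word (y :: t)) (size_eval_word (y :: t)) => // d s _ /= yd.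
have /implyP dx : (d == 1) ==> (letter_val x == 1) by rewrite yd.
case: x {xy} dx => dx; rewrite ?rho1E ?rho2E /= ?bump_eq1 //=.
  by case: eqP dx => // _ /(_ isT).
by case: eqP dx => [_ /(_ isT) | _ _] //; rewrite eq_sym (negPf (neq_bump 2 d)).
Qed.

Lemma eval_word_inj w1 w2 :
  admissible w1 -> admissible w2 -> eval_word w1 = eval_word w2 -> w1 = w2.
Proof.
move=> a1 a2 e; have := congr1 size e; rewrite !size_eval_word.
elim: w1 w2 a1 a2 e => [|x t IH] [|x' t'] // a1 a2 e [st].
case: t t' st IH a1 a2 e => [|y t] [|y' t'] // st IH a1 a2 e.
  by case: x x' a1 a2 {e} => [] [].
have xx' : x = x' by rewrite -(decode_eval_word a1) e decode_eval_word.
subst x'; congr (_ :: _); apply: IH st.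
- by move: a1; rewrite admissible_cons2 => /andP[].
- by move: a2; rewrite admissible_cons2 => /andP[].
by apply: (can_inj (rhoK (letter_val x) (letter_pos x))); rewrite -!letter_opE.
Qed.

Lemma decode_letterP n p : is_perm n.+2 p -> almost_inc1 p ->
  let x := decode_letter p in
  [/\ letter_val x \in p, letter_pos x = (index (letter_val x) p).+1
    & head 0 (unrho (letter_val x) p) = 1 -> letter_val x = 1].
Proof.
case: p => [|a [|c r]] /is_permP[up sp rp] //= ha.
have /andP[a0 _] : 0 < a <= n.+2 by apply: rp; rewrite mem_head.
have /andP[c0 _] : 0 < c <= n.+2 by apply: rp; rewrite !inE eqxx orbT.
have ac : a != c by case/andP: up; rewrite inE negb_or => /andP[].
have := ha 2 isT; rewrite /= take0 /= => ha2.
case: (eqVneq a 1) => [->|a1] /=; first by rewrite inE eqxx.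
case: (eqVneq c 1) => [->|c1] /=; first by rewrite (negPf a1) !inE eqxx orbT.
case: (eqVneq a 2) => [a2|a2] /=.
  by rewrite a2 inE eqxx; split=> //; rewrite /unrho /= /unbump; lia.
have c2 : c = 2.
  have a3 : 2 < a by lia.
  by move: ha2; rewrite a3; case: ltnP => // c2 _; lia.
rewrite c2 (negPf a2) !inE eqxx orbT; split=> //.
by rewrite /unrho /= (negPf a2) /= /unbump; lia.
Qed.

Lemma peel_letter n p : is_perm n.+2 p -> almost_inc1 p ->
  let x := decode_letter p in let s := unrho (letter_val x) p in
  [/\ letter_op x s = p, is_perm n.+1 s, almost_inc1 s
    & head 0 s = 1 -> letter_val x = 1].
Proof.
move=> hp ha /=; have /is_permP[up _ _] := hp.
have [] := decode_letterP hp ha; move: (decode_letter p) => x xp px hx.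
have x12 : 0 < letter_val x <= 2 by case: x {xp px hx}.
split=> //.
- by rewrite letter_opE px unrhoK.
- exact: unrho_perm hp xp.
- by apply: unrho_almost_inc1 => //; rewrite -ltnS -px; case: x {xp px hx x12}.
Qed.

Lemma exists_admissible_word n p : is_perm n.+1 p -> almost_inc1 p ->
  exists2 w, admissible w & eval_word w = p.
Proof.
elim: n p => [|n IH] p hp ha.
  by exists [:: R11]; rewrite // (perm_small_eq _ hp).
have [ep hs has hx] := peel_letter hp ha.
have [[|y t] aw ew] := IH _ hs has; first by [].
exists (decode_letter p :: y :: t); last by rewrite eval_word_cons ew.
rewrite admissible_cons2 aw andbT; apply/implyP => y11; apply/eqP/hx.
by rewrite -ew; apply/eqP; rewrite head_eval_word.
Qed.

Theorem theorem7p5 (n : nat) (pi : seq nat) :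
  1 <= n -> is_perm n pi -> almost_inc1 pi ->
  exists! w : seq letter,
    [/\ size w = n,
        last R22 w = R11,
        ~ has_factor [:: R21; R11] w,
        ~ has_factor [:: R22; R11] w
      & eval_word w = pi].
Proof.
case: n => // n _ hp ha.
have [w aw ew] := exists_admissible_word hp ha.
have [lw n21 n22] := admissibleP w aw.
exists w; split.
  by split=> //; rewrite -size_eval_word ew (perm_size hp) size_iota.
move=> w' [_ lw' n21' n22' ew']; apply: eval_word_inj => //; last by rewrite ew ew'.
exact/admissibleP.
Qed.
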